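(* Let $\Gamma$ be a connected countably infinite graph, let $(B_n)_{n\in\mathbb N}$ satisfy $(\dagger)$, and let $M_1,M_2$ be maximum matchings. Then every component of the symmetric difference $M_1\oplus M_2$ is alternating with respect to $M_1$ and $M_2$, and is either a cycle of even length, a double ray, or a path of even length whose two end-vertices $u,v$ both lie in $B_n\setminus B_{n-1}$ for the same $n$ (with $B_0:=\emptyset$).
   Context: Condition $(\dagger)$ on $(B_n)_{n\in\mathbb N}$: each $B_n\subseteq V(\Gamma)$ is finite, $B_n\subseteq B_{n+1}$, $\bigcup_n B_n=V(\Gamma)$, and the subgraph induced on each $B_n$ is connected. A matching $M$ misses a vertex $x$ if no edge of $M$ contains $x$. The miss sequence of $M$ is $(m_n)_{n\in\mathbb N}$ with $m_n$ the number of vertices of $B_n$ missed by $M$. For matchings $M_1,M_2$ with miss sequences $(a_n),(b_n)$, write $M_1<M_2$ if there is $N$ with $a_n=b_n$ for all $n<N$ and $a_N>b_N$. A maximum matching is a matching $M$ for which no matching $M'$ satisfies $M<M'$. A path, cycle or double ray is alternating with respect to $M$ if every other edge of it lies in $M$. $S\oplus T=(S\cup T)\setminus(S\cap T)$. *)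

From Stdlib Require Import ZArith Relation_Operators ClassicalEpsilon.
From mathcomp Require Import all_boot.

Set Implicit Arguments. Unset Strict Implicit. Unset Printing Implicit Defensive.

(* A (simple, undirected) graph on a vertex type V is a symmetric irreflexive
   relation adj.  Edge sets (matchings, symmetric differences) are symmetric
   relations on V. *)

Section Defs.
Variable V : countType.

Definition simple_graph (adj : V -> V -> Prop) : Prop :=
  (forall x y, adj x y -> adj y x) /\ (forall x, ~ adj x x).

(* countably infinite: V is a countType and nat injects into V *)
Definition countably_infinite : Prop :=
  exists f : nat -> V, injective f.

Definition connected_graph (adj : V -> V -> Prop) : Prop :=
  forall x y, clos_refl_trans V adj x y.

Definition induced_connected (adj : V -> V -> Prop) (s : seq V) : Prop :=
  forall x y, x \in s -> y \in s ->
    clos_refl_trans V (fun a b => adj a b /\ a \in s /\ b \in s) x y.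

(* Condition (dagger).  B k is the paper's B_{k+1} (the paper indexes from 1,
   with B_0 := empty); finiteness is built in since each B k is a list. *)
Definition dagger (adj : V -> V -> Prop) (B : nat -> seq V) : Prop :=
  (forall n, {subset B n <= B n.+1}) /\
  (forall x, exists n, x \in B n) /\
  (forall n, induced_connected adj (B n)).

(* x lies in the paper's B_{n+1} \ B_n  (with B_0 = empty) *)
Definition in_layer (B : nat -> seq V) (n : nat) (x : V) : Prop :=
  x \in B n /\ (forall k, n = k.+1 -> x \notin B k).

Definition matching (adj : V -> V -> Prop) (M : V -> V -> Prop) : Prop :=
  (forall x y, M x y -> M y x) /\
  (forall x y, M x y -> adj x y) /\
  (forall x y z, M x y -> M x z -> y = z).

Definition misses (M : V -> V -> Prop) (x : V) : Prop := ~ exists y, M x y.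

Definition decb (P : Prop) : bool :=
  if excluded_middle_informative P then true else false.

Definition miss (M : V -> V -> Prop) (B : nat -> seq V) (n : nat) : nat :=
  count (fun x => decb (misses M x)) (undup (B n)).

Definition lt_match (B : nat -> seq V) (M1 M2 : V -> V -> Prop) : Prop :=
  exists N, (forall n, n < N -> miss M1 B n = miss M2 B n) /\
            miss M2 B N < miss M1 B N.

Definition maximum_matching adj B (M : V -> V -> Prop) : Prop :=
  matching adj M /\ forall M', matching adj M' -> ~ lt_match B M M'.

Definition symdiff (M1 M2 : V -> V -> Prop) (x y : V) : Prop :=
  (M1 x y /\ ~ M2 x y) \/ (M2 x y /\ ~ M1 x y).

(* The component of the edge-subgraph D containing the vertex x0 (which is
   assumed to be incident to an edge of D): its vertex set is C, its edge set
   is the set of D-edges with an endpoint (equivalently both) in C. *)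

Definition alt_even_cycle (M1 M2 D : V -> V -> Prop) (C : V -> Prop) : Prop :=
  exists (s : seq V) (x0 : V),
    let n := size s in
    let v i := nth x0 s i in
    let e i := (v i, v (i.+1 %% n)) in
    uniq s /\ 4 <= n /\ ~~ odd n /\
        (forall y, C y <-> y \in s) /\
        (forall a b, C a -> (D a b <->
           (exists2 i, i < n & ((a, b) = e i \/ (b, a) = e i)))) /\
        exists bo : bool, forall i, i < n ->
          (M1 (e i).1 (e i).2 <-> odd i = bo) /\
          (M2 (e i).1 (e i).2 <-> odd i = ~~ bo).

Definition alt_double_ray (M1 M2 D : V -> V -> Prop) (C : V -> Prop) : Prop :=
  exists f : Z -> V,
    injective f /\
        (forall y, C y <-> exists i, f i = y) /\
        (forall a b, C a -> (D a b <->
           exists i, (a = f i /\ b = f (Z.succ i)) \/ (b = f i /\ a = f (Z.succ i)))) /\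
        exists bo : bool, forall i,
          (M1 (f i) (f (Z.succ i)) <-> Z.odd i = bo) /\
          (M2 (f i) (f (Z.succ i)) <-> Z.odd i = ~~ bo).

Definition alt_even_path (B : nat -> seq V) (M1 M2 D : V -> V -> Prop)
    (C : V -> Prop) : Prop :=
  exists (s : seq V) (x0 : V),
    let n := size s in
    let v i := nth x0 s i in
    uniq s /\ odd n /\
        (forall y, C y <-> y \in s) /\
        (forall a b, C a -> (D a b <->
           (exists2 i, i.+1 < n & ((a = v i /\ b = v i.+1) \/ (b = v i /\ a = v i.+1))))) /\
        (exists bo : bool, forall i, i.+1 < n ->
          (M1 (v i) (v i.+1) <-> odd i = bo) /\
          (M2 (v i) (v i.+1) <-> odd i = ~~ bo)) /\
        exists k, in_layer B k (v 0) /\ in_layer B k (v n.-1).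

End Defs.

From Stdlib Require Import ZArith Relation_Operators Operators_Properties Lia ClassicalEpsilon.
From mathcomp Require Import all_boot zify.

Set Implicit Arguments. Unset Strict Implicit. Unset Printing Implicit Defensive.

(* Let D = M1 (+) M2 and let x0 be a vertex with a D-edge.  Every vertex meets
   at most one edge of each matching, so the component of x0 is traced by a
   walk [walk : Z -> option V] through x0 whose i-th step uses the D-edge of
   M1 (i even) or of M2 (i odd).  An end of the walk is a vertex missed
     by one matching, and the exchange at that end forces the other end to
     exist, at even distance and in the same layer B_n \ B_(n-1): the
     component is an even alternating path.  With no ends it is a double ray. *)

Lemma decbE (P : Prop) : decb P <-> P.
Proof. by rewrite /decb; case: excluded_middle_informative. Qed.

Lemma count_le_in (T : eqType) (s : seq T) (p q : pred T) :
  {in s, forall x, p x -> q x} -> count p s <= count q s.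
Proof.
elim: s => //= a s IH pq; apply: leq_add.
  by case: (p a) (pq a (mem_head a s)) => // /(_ isT) ->.
by apply: IH => x xs; apply: pq; rewrite inE xs orbT.
Qed.

Lemma count_lt_in (T : eqType) (s : seq T) (p q : pred T) (u : T) :
  {in s, forall x, p x -> q x} -> u \in s -> ~~ p u -> q u ->
  count p s < count q s.
Proof.
move=> pq us pu qu; rewrite !(permP (perm_to_rem us)) /= (negbTE pu) qu ltnS.
by apply: count_le_in => x /mem_rem; apply: pq.
Qed.

Section Exchange.
Variables (V : countType) (adj : V -> V -> Prop) (B : nat -> seq V).
Hypothesis B_incr : forall n, {subset B n <= B n.+1}.

Lemma B_mono m n : m <= n -> {subset B m <= B n}.
Proof.
elim: n => [|n IH]; first by rewrite leqn0 => /eqP ->.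
by rewrite leq_eqVlt => /orP[/eqP -> //|/IH sub x /sub /B_incr].
Qed.

Lemma fewer_misses_lt (M M' : V -> V -> Prop) (u : V) (n : nat) :
  misses M u -> ~ misses M' u -> u \in B n ->
  (forall x, x \in B n -> misses M' x -> misses M x) -> lt_match B M M'.
Proof.
move=> Mu M'u un sub.
have le m : m <= n -> miss M' B m <= miss M B m.
  move=> mn; apply: count_le_in => x; rewrite mem_undup => xm /decbE M'x.
  by apply/decbE; apply: sub (B_mono mn xm) M'x.
have lt_n : miss M' B n < miss M B n.
  apply: (count_lt_in (u := u)); last exact/decbE.
  - move=> x; rewrite mem_undup => xn /decbE M'x.
    by apply/decbE; apply: sub xn M'x.
  - by rewrite mem_undup.
  - by apply/negP => /decbE.
have ex : exists m, miss M' B m < miss M B m by exists n.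
case: (ex_minnP ex) => N ltN minN.
exists N; split=> // m mN; have mn : m <= n by have := minN n lt_n; lia.
apply/eqP; rewrite eqn_leq le // andbT leqNgt; apply/negP => /minN; lia.
Qed.

Definition closed_under (M : V -> V -> Prop) (C : V -> Prop) : Prop :=
  forall x y, C x -> M x y -> C y.

Definition swap_on (C : V -> Prop) (Ma Mb : V -> V -> Prop) (x y : V) : Prop :=
  (C x /\ Mb x y) \/ (~ C x /\ Ma x y).

Lemma swap_matching (C : V -> Prop) (Ma Mb : V -> V -> Prop) :
  matching adj Ma -> matching adj Mb -> closed_under Ma C -> closed_under Mb C ->
  matching adj (swap_on C Ma Mb).
Proof.
move=> [syma [adja funa]] [symb [adjb funb]] cla clb; split; last split.
- move=> x y [[Cx Mxy]|[Cx Mxy]]; first by left; split; [apply: clb Cx Mxy|apply: symb].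
  by right; split; [move=> /cla /(_ (syma _ _ Mxy))|apply: syma].
- by move=> x y [[_ Mxy]|[_ Mxy]]; [apply: adjb|apply: adja].
- move=> x y z [[Cx Mxy]|[Cx Mxy]] [[Cx' Mxz]|[Cx' Mxz]]; try tauto.
  + exact: funb Mxy Mxz.
  + exact: funa Mxy Mxz.
Qed.

Lemma swap_misses (C : V -> Prop) (Ma Mb : V -> V -> Prop) (x : V) :
  misses (swap_on C Ma Mb) x -> (C x /\ misses Mb x) \/ (~ C x /\ misses Ma x).
Proof.
move=> H; case: (classic (C x)) => Cx; [left|right];
  by split=> // -[y Mxy]; apply: H; exists y; rewrite /swap_on; tauto.
Qed.

Lemma no_improving_swap (C : V -> Prop) (Ma Mb : V -> V -> Prop) (u : V) (n : nat) :
  maximum_matching adj B Ma -> matching adj Mb ->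
  closed_under Ma C -> closed_under Mb C ->
  C u -> misses Ma u -> ~ misses Mb u -> u \in B n ->
  (forall x, C x -> x \in B n -> misses Mb x -> misses Ma x) -> False.
Proof.
move=> [mMa maxMa] mMb cla clb Cu Mau Mbu un sub.
apply: (maxMa _ (swap_matching mMa mMb cla clb)).
apply: (fewer_misses_lt (u := u) (n := n)) => //.
- by move/swap_misses => [[_ /Mbu]|[]].
- by move=> x xn /swap_misses [[Cx Mbx]|[_ Max]] //; apply: sub.
Qed.
End Exchange.

Lemma nat_prefix (P : nat -> Prop) : P 0 -> (forall n, P n.+1 -> P n) ->
  (exists k, forall n, P n <-> n <= k) \/ (forall n, P n).
Proof.
move=> P0 Pdown; case: (classic (exists n, ~ P n)) => [ex|all]; last first.
  by right=> n; apply: NNPP => nPn; apply: all; exists n.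
have ex' : exists n, decb (~ P n) by case: ex => n nPn; exists n; apply/decbE.
case: (ex_minnP ex') => m /decbE nPm minm; left.
have m0 : 0 < m by case: m nPm {minm}.
have Pdown' p q : q <= p -> P p -> P q.
  elim: p => [|p IH]; first by rewrite leqn0 => /eqP ->.
  by rewrite leq_eqVlt => /orP[/eqP -> //|/IH qp /Pdown].
exists m.-1 => p; split=> [Pp|pm].
- by rewrite leqNgt; apply/negP => mp; apply: nPm; apply: Pdown' Pp; lia.
- by apply: NNPP => nPp; have := minm p (proj2 (decbE _) nPp); lia.
Qed.

Definition in_range (lo hi : option Z) (i : Z) : Prop :=
  (forall a, lo = Some a -> (a <= i)%Z) /\ (forall b, hi = Some b -> (i <= b)%Z).

Lemma range_last lo hi i : in_range lo hi i -> ~ in_range lo hi (i + 1) -> hi = Some i.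
Proof.
move=> [loi hii] ni; case E: hi hii => [b|] hii; last first.
  by exfalso; apply: ni; split=> [a /loi|b']; [lia|rewrite E].
congr Some; apply: Z.le_antisymm; last exact: hii.
case: (Z.leb_spec b i) => // bi; exfalso; apply: ni.
by split=> [a /loi|b']; [lia|rewrite E => -[<-]; lia].
Qed.

Lemma range_first lo hi i : in_range lo hi i -> ~ in_range lo hi (i - 1) -> lo = Some i.
Proof.
move=> [loi hii] ni; case E: lo loi => [a|] loi; last first.
  by exfalso; apply: ni; split=> [a'|b /hii]; [rewrite E|lia].
congr Some; apply: Z.le_antisymm; first exact: loi.
case: (Z.leb_spec i a) => // ia; exfalso; apply: ni.
by split=> [a'|b /hii]; [rewrite E => -[<-]; lia|lia].
Qed.

Lemma Zodd_nat (n : nat) : Z.odd (Z.of_nat n) = odd n.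
Proof. by elim: n => [//|n IH]; rewrite Nat2Z.inj_succ Z.odd_succ -Z.negb_odd IH. Qed.

Definition partner (V : Type) (R : V -> V -> Prop) (c : V) : option V :=
  match excluded_middle_informative (exists y, R c y) with
  | left h => Some (proj1_sig (constructive_indefinite_description _ h))
  | right _ => None
  end.

Lemma partner_some (V : Type) (R : V -> V -> Prop) (c d : V) :
  (forall y z, R c y -> R c z -> y = z) -> partner R c = Some d <-> R c d.
Proof.
rewrite /partner => fR; case: excluded_middle_informative => [h|h]; last first.
  by split=> // Rcd; case: h; exists d.
case: (constructive_indefinite_description _ h) => y /= Rcy.
by split=> [[<-] //|Rcd]; rewrite (fR _ _ Rcy Rcd).
Qed.

Lemma partner_none (V : Type) (R : V -> V -> Prop) (c : V) :
  partner R c = None <-> ~ exists y, R c y.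
Proof. by rewrite /partner; case: excluded_middle_informative. Qed.

Section Walk.
Variables (V : countType) (adj : V -> V -> Prop) (M1 M2 : V -> V -> Prop).
Hypotheses (Hsg : simple_graph adj) (HM1 : matching adj M1) (HM2 : matching adj M2).
Variable x0 : V.

Local Notation D := (symdiff M1 M2).

Lemma D_sym a b : D a b -> D b a.
Proof.
have [sym1 _] := HM1; have [sym2 _] := HM2.
case=> -[Mab nMab]; [left|right]; split.
- exact: sym1.
- by move/sym2.
- exact: sym2.
- by move/sym1.
Qed.

Lemma D_irrefl a : ~ D a a.
Proof.
by case=> -[Maa _]; apply: (Hsg.2 a); [apply: HM1.2.1 Maa|apply: HM2.2.1 Maa].
Qed.

Definition Mstep (i : Z) : V -> V -> Prop := if Z.odd i then M2 else M1.

Lemma Mstep_match i : matching adj (Mstep i).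
Proof. by rewrite /Mstep; case: (Z.odd i). Qed.

Lemma Mstep_max B i :
  maximum_matching adj B M1 -> maximum_matching adj B M2 ->
  maximum_matching adj B (Mstep i).
Proof. by rewrite /Mstep; case: (Z.odd i). Qed.

Lemma D_Mstep i a b : D a b -> (Mstep i a b /\ D a b) \/ (Mstep (i - 1) a b /\ D a b).
Proof.
rewrite /Mstep Z.odd_sub /= => Dab; have := Dab.
by case: (Z.odd i) => /= -[[Mab _]|[Mab _]]; tauto.
Qed.

Definition step (i : Z) (c : V) : option V := partner (fun a b => Mstep i a b /\ D a b) c.

Lemma step_spec i c d : step i c = Some d <-> Mstep i c d /\ D c d.
Proof.
apply: partner_some => y z [Mcy _] [Mcz _]; exact: (Mstep_match i).2.2 _ _ _ Mcy Mcz.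
Qed.

Lemma step_sym i c d : step i c = Some d -> step i d = Some c.
Proof. by rewrite !step_spec => -[/(Mstep_match i).1 Mdc /D_sym]. Qed.

Lemma step_D i c d : step i c = Some d -> D c d.
Proof. by case/step_spec. Qed.

Lemma step_irrefl i c : step i c <> Some c.
Proof. by move=> /step_D /D_irrefl. Qed.

Lemma step_parity i j : Z.odd i = Z.odd j -> step i = step j.
Proof. by rewrite /step /Mstep => ->. Qed.

Fixpoint walk_up (n : nat) : option V :=
  if n is n'.+1 then obind (step (Z.of_nat n')) (walk_up n') else Some x0.

Fixpoint walk_down (n : nat) : option V :=
  if n is n'.+1 then obind (step (- Z.of_nat n' - 1)) (walk_down n') else Some x0.

Definition walk (i : Z) : option V :=
  if (0 <=? i)%Z then walk_up (Z.to_nat i) else walk_down (Z.to_nat (- i)).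

Lemma walk0 : walk 0 = Some x0.
Proof. by []. Qed.

Lemma walk0_defined : walk 0 <> None.
Proof. by rewrite walk0. Qed.

Lemma walk_up_eq i : (0 <= i)%Z -> walk (i + 1) = obind (step i) (walk i).
Proof.
move=> i0; rewrite /walk (proj2 (Z.leb_le 0 i) i0) (proj2 (Z.leb_le 0 (i + 1))); last lia.
by rewrite (_ : Z.to_nat (i + 1) = (Z.to_nat i).+1) /= ?Z2Nat.id //; lia.
Qed.

Lemma walk_down_eq i : (i < 0)%Z -> walk i = obind (step i) (walk (i + 1)).
Proof.
move=> i0; rewrite /walk (proj2 (Z.leb_gt 0 i) i0).
rewrite (_ : Z.to_nat (- i) = (Z.to_nat (- (i + 1))).+1) /=; last lia.
rewrite (_ : (- Z.of_nat (Z.to_nat (- (i + 1))) - 1 = i)%Z); last lia.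
by case: (Z.leb_spec 0 (i + 1)) => h; rewrite // (_ : (i + 1 = 0)%Z); last lia.
Qed.

Lemma walk_succ i c : walk i = Some c -> walk (i + 1) = step i c.
Proof.
case: (Z.leb_spec 0 i) => i0; first by rewrite walk_up_eq // => ->.
by rewrite walk_down_eq //; case: (walk (i + 1)) => [d|] //= /step_sym ->.
Qed.

Lemma walk_pred i d : walk (i + 1) = Some d -> walk i = step i d.
Proof.
case: (Z.leb_spec 0 i) => i0; last by rewrite (walk_down_eq i0) => ->.
by rewrite walk_up_eq //; case: (walk i) => [c|] //= /step_sym ->.
Qed.

Definition comp (y : V) : Prop := clos_refl_trans V D x0 y.

Lemma walk_comp i c : walk i = Some c -> comp c.
Proof.
suff H n c' : (walk (Z.of_nat n) = Some c' -> comp c') /\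
              (walk (- Z.of_nat n) = Some c' -> comp c').
  case: (Z.leb_spec 0 i) => i0.
    by rewrite -(Z2Nat.id i i0); apply: (H _ c).1.
  by rewrite (_ : i = - Z.of_nat (Z.to_nat (- i)))%Z; [apply: (H _ c).2|lia].
elim: n c' => [|n IH] c'; first by split=> -[<-]; apply: rt_refl.
split.
- rewrite Nat2Z.inj_succ -Z.add_1_r walk_up_eq; last lia.
  case E: (walk _) => [b|] //= /step_D Dbc.
  exact: rt_trans ((IH b).1 E) (rt_step _ _ _ _ Dbc).
- rewrite walk_down_eq; last lia.
  rewrite (_ : (- Z.of_nat n.+1 + 1 = - Z.of_nat n)%Z); last lia.
  case E: (walk _) => [b|] //= /step_sym /step_D Dcb.
  exact: rt_trans ((IH b).2 E) (rt_step _ _ _ _ (D_sym Dcb)).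
Qed.

Lemma walk_D i z y : walk i = Some z -> D z y ->
  walk (i + 1) = Some y \/ walk (i - 1) = Some y.
Proof.
move=> wi /(D_Mstep i) [/step_spec E|/step_spec E].
  by left; rewrite (walk_succ wi).
by right; rewrite (walk_pred (d := z)) ?Z.sub_add // step_sym.
Qed.

Lemma comp_walk y : comp y -> exists i, walk i = Some y.
Proof.
move=> Cy; elim: (clos_rt_rtn1 _ _ _ _ Cy) => [|z y' Dz _ [i wi]]; first by exists 0%Z.
by case: (walk_D wi Dz); eauto.
Qed.

Lemma walk_edges i a b : walk i = Some a ->
  (D a b <-> exists j, (walk j = Some a /\ walk (j + 1) = Some b) \/
                       (walk j = Some b /\ walk (j + 1) = Some a)).
Proof.
move=> wi; split.
- case/(walk_D wi) => E; first by exists i; left.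
  by exists (i - 1)%Z; right; rewrite Z.sub_add.
- move=> [j [[wj wj1]|[wj wj1]]]; move: wj1; rewrite (walk_succ wj) => /step_D //.
  exact: D_sym.
Qed.

Lemma walk_edge_type j a b : walk j = Some a -> walk (j + 1) = Some b ->
  (M1 a b <-> Z.odd j = false) /\ (M2 a b <-> Z.odd j = true).
Proof.
move=> wj; rewrite (walk_succ wj) step_spec /Mstep.
by case: (Z.odd j) => -[Mab [[M nM]|[M nM]]]; split; split=> // H; exfalso; tauto.
Qed.

Lemma walk_none_up i : (0 <= i)%Z -> walk i = None -> forall j, (i <= j)%Z -> walk j = None.
Proof.
move=> i0 wi; suff H n : walk (i + Z.of_nat n) = None.
  by move=> j ij; have := H (Z.to_nat (j - i)); rewrite Z2Nat.id ?Zplus_minus //; lia.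
elim: n => [|n IH]; first by rewrite Z.add_0_r.
by rewrite Nat2Z.inj_succ -Z.add_1_r Z.add_assoc walk_up_eq ?IH //; lia.
Qed.

Lemma walk_none_down i : (i <= 0)%Z -> walk i = None -> forall j, (j <= i)%Z -> walk j = None.
Proof.
move=> i0 wi; suff H n : walk (i - Z.of_nat n) = None.
  by move=> j ji; have := H (Z.to_nat (i - j)); rewrite Z2Nat.id ?Z.sub_sub_distr ?Z.sub_diag //; lia.
elim: n => [|n IH]; first by rewrite Z.sub_0_r.
by rewrite Nat2Z.inj_succ -Z.add_1_r Z.sub_add_distr walk_down_eq ?Z.sub_add ?IH //; lia.
Qed.

Lemma walk_interval a b k : walk a <> None -> walk b <> None -> (a <= k <= b)%Z ->
  walk k <> None.
Proof.
move=> wa wb ak wk; case: (Z.leb_spec 0 k) => k0.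
- by apply: wb; apply: (walk_none_up k0 wk); lia.
- by apply: wa; apply: (walk_none_down _ wk); lia.
Qed.

Lemma walk_next k i : walk k <> None -> (k <= i)%Z -> walk (i + 1) = obind (step i) (walk i).
Proof.
move=> wk ki; case E: (walk i) => [c|] /=; first exact: walk_succ.
have i0 : (0 <= i)%Z.
  case: (Z.leb_spec 0 i) => // i0.
  by case: (walk_interval wk walk0_defined (k := i)) => //; lia.
by apply: (walk_none_up i0 E); lia.
Qed.

Lemma walk_prev k i : walk k <> None -> (i <= k)%Z -> walk (i - 1) = obind (step (i - 1)) (walk i).
Proof.
move=> wk ik; case E: (walk i) => [d|] /=; first by apply: walk_pred; rewrite Z.sub_add.
have i0 : (i <= 0)%Z.
  case: (Z.leb_spec i 0) => // i0.
  by case: (walk_interval walk0_defined wk (k := i)) => //; lia.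
by apply: (walk_none_down i0 E); lia.
Qed.

(* Since each step depends only on the parity of its index, two visits of the
   same vertex at positions of equal parity see the same walk around them. *)
Lemma walk_translate i j c : walk i = Some c -> walk j = Some c -> Z.odd i = Z.odd j ->
  forall t, walk (i + t) = walk (j + t).
Proof.
move=> wi wj ij; have wi' : walk i <> None by rewrite wi.
have wj' : walk j <> None by rewrite wj.
have up n : walk (i + Z.of_nat n) = walk (j + Z.of_nat n).
  elim: n => [|n IH]; first by rewrite !Z.add_0_r wi wj.
  rewrite Nat2Z.inj_succ -Z.add_1_r !Z.add_assoc (walk_next wi') ?(walk_next wj'); try lia.
  by rewrite IH (step_parity (j := (j + Z.of_nat n)%Z)) // !Z.odd_add ij.
have down n : walk (i - Z.of_nat n) = walk (j - Z.of_nat n).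
  elim: n => [|n IH]; first by rewrite !Z.sub_0_r wi wj.
  rewrite Nat2Z.inj_succ -Z.add_1_r !Z.sub_add_distr (walk_prev wi') ?(walk_prev wj'); try lia.
  by rewrite IH (step_parity (j := (j - Z.of_nat n - 1)%Z)) // !Z.odd_sub ij.
move=> t; case: (Z.leb_spec 0 t) => t0; first by rewrite -(Z2Nat.id t t0).
have e x : (x + t = x - Z.of_nat (Z.to_nat (- t)))%Z by lia.
by rewrite !e.
Qed.

(* A walk never returns to a vertex after an odd number of steps: the two
   visits would force the inner parts of the walk to meet in a loop. *)
Lemma walk_odd_return n i c : walk i = Some c -> walk (i + 2 * Z.of_nat n + 1) <> Some c.
Proof.
elim: n i c => [|n IH] i c wi; first by rewrite Z.add_0_r (walk_succ wi); apply: step_irrefl.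
set j := (i + _ + 1)%Z => wj.
have [e wi1] : exists e, walk (i + 1) = Some e.
  case E: (walk (i + 1)) => [e|]; first by exists e.
  by exfalso; apply: (walk_interval (k := (i + 1)%Z) (a := i) (b := j)); rewrite ?wi ?wj ?E //; lia.
have wj1 : walk (j - 1) = Some e.
  rewrite (walk_pred (d := c)) ?Z.sub_add // -wi1 (walk_succ wi) (@step_parity _ i) //.
  by rewrite /j Z.odd_sub !Z.odd_add Z.odd_mul /=; case: (Z.odd i).
apply: (IH (i + 1)%Z e wi1); rewrite -wj1; congr walk; lia.
Qed.

Lemma walk_parity i j c : walk i = Some c -> walk j = Some c -> Z.odd i = Z.odd j.
Proof.
wlog ij : i j / (i <= j)%Z.
  move=> H wi wj; case: (Z.leb_spec i j) => ij; first exact: H.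
  by symmetry; apply: H => //; lia.
move=> wi wj; case: (boolP (Z.odd i == Z.odd j)) => [/eqP //|odd_ij].
have /Z.odd_spec [m em] : Z.odd (j - i) = true.
  by rewrite Z.odd_sub; move: odd_ij; case: (Z.odd i); case: (Z.odd j).
have m0 : (0 <= m)%Z by lia.
case: (walk_odd_return (n := Z.to_nat m) wi).
by rewrite Z2Nat.id // (_ : (i + 2 * m + 1 = j)%Z) //; lia.
Qed.

Definition walk_domain (lo hi : option Z) : Prop :=
  forall i, walk i <> None <-> in_range lo hi i.

Lemma walk_domain_exists : exists lo hi, walk_domain lo hi.
Proof.
have [hi Hhi] : exists hi, forall n : nat,
    walk (Z.of_nat n) <> None <-> forall b, hi = Some b -> (Z.of_nat n <= b)%Z.
  case: (nat_prefix (P := fun n => walk (Z.of_nat n) <> None)) => [|n|[k Hk]|all].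
  - exact: walk0_defined.
  - by move=> wn; apply: (walk_interval walk0_defined wn); lia.
  - exists (Some (Z.of_nat k)) => n; rewrite Hk.
    by split=> [kn _ [<-]|/(_ _ erefl)]; lia.
  - by exists None.
have [lo Hlo] : exists lo, forall n : nat,
    walk (- Z.of_nat n) <> None <-> forall a, lo = Some a -> (a <= - Z.of_nat n)%Z.
  case: (nat_prefix (P := fun n => walk (- Z.of_nat n) <> None)) => [|n|[k Hk]|all].
  - exact: walk0_defined.
  - by move=> wn; apply: (walk_interval wn walk0_defined); lia.
  - exists (Some (- Z.of_nat k)%Z) => n; rewrite Hk.
    by split=> [kn _ [<-]|/(_ _ erefl)]; lia.
  - by exists None.
have lo0 a : lo = Some a -> (a <= 0)%Z by exact: ((Hlo 0).1 walk0_defined a).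
have hi0 b : hi = Some b -> (0 <= b)%Z by exact: ((Hhi 0).1 walk0_defined b).
exists lo, hi => i; case: (Z.leb_spec 0 i) => i0.
- rewrite -(Z2Nat.id i i0) Hhi; split=> [H|[_ H]] //.
  by split=> // a /lo0; lia.
- rewrite (_ : i = - Z.of_nat (Z.to_nat (- i)))%Z; last lia.
  rewrite Hlo; split=> [H|[H _]] //.
  by split=> // b /hi0; lia.
Qed.

Hypothesis Hx0 : exists y, D x0 y.

Lemma comp_D c : comp c -> exists z, D c z.
Proof.
move=> Cc; case: (clos_rt_rtn1 _ _ _ _ Cc) => [|z y Dzy _]; first exact: Hx0.
by exists z; apply: D_sym.
Qed.

Lemma comp_not_both c y : comp c -> M1 c y -> M2 c y -> False.
Proof.
move=> /comp_D [z [[M1cz nM2cz]|[M2cz nM1cz]]] M1cy M2cy.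
- by apply: nM2cz; rewrite (HM1.2.2 _ _ _ M1cz M1cy).
- by apply: nM1cz; rewrite (HM2.2.2 _ _ _ M2cz M2cy).
Qed.

Lemma Mstep_D i c y : comp c -> Mstep i c y -> D c y.
Proof.
rewrite /Mstep => Cc; case: (Z.odd i) => Mcy; [right|left]; split=> // M.
- exact: comp_not_both Cc M Mcy.
- exact: comp_not_both Cc Mcy M.
Qed.

Lemma comp_closed i : closed_under (Mstep i) comp.
Proof. by move=> x y Cx Mxy; apply: rt_trans Cx (rt_step _ _ _ _ (Mstep_D Cx Mxy)). Qed.

Lemma step_none i c : comp c -> (step i c = None <-> misses (Mstep i) c).
Proof.
rewrite /step partner_none /misses => Cc.
split=> H [y Hy]; apply: H; exists y; last by case: Hy.
by split=> //; apply: Mstep_D Cc Hy.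
Qed.

Lemma walk_stop_up i x : walk i = Some x -> (misses (Mstep i) x <-> walk (i + 1) = None).
Proof. by move=> wi; rewrite (walk_succ wi) (step_none _ (walk_comp wi)). Qed.

Lemma walk_stop_down i x : walk i = Some x ->
  (misses (Mstep (i - 1)) x <-> walk (i - 1) = None).
Proof.
move=> wi; have wi' : walk (i - 1 + 1) = Some x by rewrite Z.sub_add.
by rewrite (walk_pred wi') (step_none _ (walk_comp wi)).
Qed.

Lemma walk_nontrivial : walk 1 <> None \/ walk (-1) <> None.
Proof. by case: Hx0 => y /(walk_D walk0) [E|E]; [left|right]; rewrite ?E. Qed.

Lemma Z_odd_pred i : Z.odd (i - 1) = ~~ Z.odd i.
Proof. by rewrite Z.odd_sub; case: (Z.odd i). Qed.

Lemma walk_misses lo hi i j x : walk_domain lo hi -> walk i = Some x ->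
  misses (Mstep j) x ->
  (Z.odd j = Z.odd i /\ hi = Some i) \/ (Z.odd j <> Z.odd i /\ lo = Some i).
Proof.
move=> dom wi Mx; have ri : in_range lo hi i by apply/dom; rewrite wi.
case: (boolP (Z.odd j == Z.odd i)) => /eqP ji; [left|right]; split=> //.
- have /(walk_stop_up wi) wi1 : misses (Mstep i) x by rewrite /Mstep -ji.
  by apply: (range_last ri); rewrite -dom wi1.
- have /(walk_stop_down wi) wi1 : misses (Mstep (i - 1)) x.
    by rewrite /Mstep Z_odd_pred; move: ji Mx; rewrite /Mstep; case: (Z.odd j); case: (Z.odd i).
  by apply: (range_first ri); rewrite -dom wi1.
Qed.

Lemma walk_first lo hi a : walk_domain lo hi -> lo = Some a -> exists u, walk a = Some u.
Proof.
move=> dom loa; have [lo0 hi0] := (dom 0%Z).1 walk0_defined.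
case E: (walk a) => [u|]; first by exists u.
have a0 := lo0 a loa; case: ((dom a).2 _ E).
by split=> [a'|b /hi0]; [rewrite loa => -[<-]|]; lia.
Qed.

Lemma walk_last lo hi b : walk_domain lo hi -> hi = Some b -> exists w, walk b = Some w.
Proof.
move=> dom hib; have [lo0 hi0] := (dom 0%Z).1 walk0_defined.
case E: (walk b) => [w|]; first by exists w.
have b0 := hi0 b hib; case: ((dom b).2 _ E).
by split=> [a /lo0|b']; [|rewrite hib => -[<-]]; lia.
Qed.

Lemma first_next lo hi a : walk_domain lo hi -> lo = Some a -> walk (a + 1) <> None.
Proof.
move=> dom loa; have [u wa] := walk_first dom loa.
have wa' : walk a <> None by rewrite wa.
have a0 := ((dom 0%Z).1 walk0_defined).1 a loa.
case: walk_nontrivial => w; first by apply: (walk_interval wa' w); lia.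
have := ((dom _).1 w).1 a loa => am1.
by apply: (walk_interval wa' walk0_defined); lia.
Qed.

Lemma last_prev lo hi b : walk_domain lo hi -> hi = Some b -> walk (b - 1) <> None.
Proof.
move=> dom hib; have [w wb] := walk_last dom hib.
have wb' : walk b <> None by rewrite wb.
have b0 := ((dom 0%Z).1 walk0_defined).2 b hib.
case: walk_nontrivial => w'; last by apply: (walk_interval w' wb'); lia.
have := ((dom _).1 w').2 b hib => b1.
by apply: (walk_interval walk0_defined wb'); lia.
Qed.

Variable B : nat -> seq V.
Hypotheses (Hdag : dagger adj B)
  (HMM1 : maximum_matching adj B M1) (HMM2 : maximum_matching adj B M2).

(* Exchange at the first vertex [u] (position [a]) of the walk, missed by
   [Mstep (a - 1)]: using [Mstep a] instead on the component covers [u], so by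
   maximality it uncovers a vertex of every [B n] containing [u], and such a
   vertex can only be the last vertex of the walk, at a position of the
   parity of [a].  Symmetrically at the last vertex. *)
Lemma first_end lo hi a u n : walk_domain lo hi -> lo = Some a -> walk a = Some u ->
  u \in B n ->
  exists b w, [/\ hi = Some b, walk b = Some w, Z.odd b = Z.odd a & w \in B n].
Proof.
move=> dom loa wa un; apply: NNPP => no.
apply: (no_improving_swap Hdag.1 (Mstep_max (a - 1)%Z HMM1 HMM2) (Mstep_match a)
  (@comp_closed _) (@comp_closed _) (walk_comp wa) _ _ un).
- apply/(walk_stop_down wa); case E: walk => [y|] //; exfalso.
  have /dom [/(_ a loa) a1 _] : walk (a - 1)%Z <> None by rewrite E.
  lia.
- by rewrite (walk_stop_up wa); apply: first_next dom loa.
- move=> x Cx xn Mx; have [i wi] := comp_walk Cx.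
  case: (walk_misses dom wi Mx) => -[par E]; first by case: no; exists i, x.
  by move: E par; rewrite loa => -[<-].
Qed.

Lemma last_end lo hi b w n : walk_domain lo hi -> hi = Some b -> walk b = Some w ->
  w \in B n ->
  exists a u, [/\ lo = Some a, walk a = Some u, Z.odd a = Z.odd b & u \in B n].
Proof.
move=> dom hib wb wn; apply: NNPP => no.
apply: (no_improving_swap Hdag.1 (Mstep_max b HMM1 HMM2) (Mstep_match (b - 1)%Z)
  (@comp_closed _) (@comp_closed _) (walk_comp wb) _ _ wn).
- apply/(walk_stop_up wb); case E: walk => [y|] //; exfalso.
  have /dom [_ /(_ b hib) b1] : walk (b + 1)%Z <> None by rewrite E.
  lia.
- by rewrite (walk_stop_down wb); apply: last_prev dom hib.
- move=> x Cx xn Mx; have [i wi] := comp_walk Cx.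
  case: (walk_misses dom wi Mx) => -[par E].
  + by move: E par; rewrite hib Z_odd_pred => -[<-]; case: (Z.odd b).
  + case: no; exists i, x; split=> //.
    by move: par; rewrite Z_odd_pred; case: (Z.odd i); case: (Z.odd b).
Qed.

(* If the walk ends on both sides, applying the exchange at each end shows
   that both ends enter the sets [B k] at the same index: they share a layer. *)
Lemma path_layer a b u w : walk_domain (Some a) (Some b) -> walk a = Some u ->
  walk b = Some w -> exists k, in_layer B k u /\ in_layer B k w.
Proof.
move=> dom wa wb; have [k uk mink] := ex_minnP (Hdag.2.1 u).
have [_ [w' [[<-] wb' _ wk]]] := first_end dom erefl wa uk.
move: wb' wk; rewrite wb => -[<-] wk.
exists k; split; split=> // j kj; apply/negP => jB.
- by have := mink j jB; lia.
- have [_ [u' [[<-] wa' _ uj]]] := last_end dom erefl wb jB.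
  by move: wa' uj; rewrite wa => -[<-] /mink; lia.
Qed.

Definition window (a : Z) (len : nat) : seq V :=
  mkseq (fun k => odflt x0 (walk (a + Z.of_nat k))) len.

Lemma window_nth a len k : (forall j, j < len -> walk (a + Z.of_nat j) <> None) ->
  k < len -> walk (a + Z.of_nat k) = Some (nth x0 (window a len) k).
Proof. by move=> def kl; rewrite nth_mkseq //; case: walk (def k kl). Qed.

Lemma window_edge_type a k x y : walk (a + Z.of_nat k) = Some x ->
  walk (a + Z.of_nat k + 1) = Some y ->
  (M1 x y <-> odd k = Z.odd a) /\ (M2 x y <-> odd k = ~~ Z.odd a).
Proof.
move=> wk /(walk_edge_type wk); rewrite Z.odd_add Zodd_nat => -[-> ->].
by case: (Z.odd a); case: (odd k).
Qed.

Section Cycle.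
Variable n : nat.
Hypotheses (n_pos : 0 < n) (walk_n : walk (Z.of_nat n) = Some x0)
  (n_min : forall p, 0 < p -> walk (Z.of_nat p) = Some x0 -> n <= p).

Lemma cycle_even : Z.odd (Z.of_nat n) = false.
Proof. exact: walk_parity walk_n walk0. Qed.

Lemma walk_multiple q t : walk (t + q * Z.of_nat n) = walk t.
Proof.
have per t' : walk (t' + Z.of_nat n) = walk t'.
  by rewrite Z.add_comm (walk_translate walk_n walk0 cycle_even t').
elim/Z.peano_ind: q t => [t|q IH t|q IH t].
- by rewrite Z.mul_0_l Z.add_0_r.
- by rewrite Z.mul_succ_l Z.add_assoc per IH.
- by rewrite -(IH t) -per; congr walk; rewrite Z.mul_pred_l; lia.
Qed.

Lemma cycle_reduce t : exists2 k, k < n &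
  walk t = walk (Z.of_nat k) /\ walk (t + 1) = walk (Z.of_nat k + 1).
Proof.
have n0 : (0 < Z.of_nat n)%Z by lia.
have e := Z_div_mod_eq_full t (Z.of_nat n); have := Z.mod_pos_bound t _ n0.
move: (t / Z.of_nat n)%Z (t mod Z.of_nat n)%Z e => d r e rn.
exists (Z.to_nat r); first lia.
rewrite Z2Nat.id; last lia.
by split; [rewrite -(walk_multiple d r) | rewrite -(walk_multiple d (r + 1))];
  congr walk; lia.
Qed.

Lemma cycle_inj j k c : j < k -> k < n -> walk (Z.of_nat j) = Some c ->
  walk (Z.of_nat k) = Some c -> False.
Proof.
move=> jk kn wj wk; have := walk_translate wj wk (walk_parity wj wk) (- Z.of_nat j).
rewrite Z.add_opp_diag_r walk0 Z.add_opp_r => ret.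
have : n <= k - j by apply: n_min; [rewrite subn_gt0 | rewrite Nat2Z.inj_sub ?ret //; lia].
lia.
Qed.

(* A cycle of length 2 would be an edge of both matchings. *)
Lemma cycle_length : 4 <= n.
Proof.
have ev : ~~ odd n by rewrite -Zodd_nat cycle_even.
suff n2 : n != 2 by move: n_pos ev n2; case: (n) => [|[|[|[|m]]]].
apply/eqP => n2; have w2 : walk 2 = Some x0 by rewrite -walk_n n2.
case E: (walk 1) => [y|]; last first.
  by case: (walk_interval walk0_defined (b := 2%Z) (k := 1%Z)); rewrite ?w2.
have [M1x0y _] := walk_edge_type (j := 0%Z) walk0 E.
have [_ M2yx0] := walk_edge_type (j := 1%Z) E w2.
apply: (comp_not_both (walk_comp walk0) (proj2 M1x0y erefl)).
exact: HM2.1 _ _ (proj2 M2yx0 erefl).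
Qed.

Let s := window 0 n.

Lemma cycle_nth j : j < n -> walk (Z.of_nat j) = Some (nth x0 s j).
Proof.
apply: (window_nth (a := 0%Z)) => k kn; apply: (walk_interval walk0_defined (b := Z.of_nat n)).
- by rewrite walk_n.
- lia.
Qed.

Lemma cycle_next j : j < n -> walk (Z.of_nat j + 1) = Some (nth x0 s (j.+1 %% n)).
Proof.
move=> jn; rewrite Z.add_1_r -Nat2Z.inj_succ.
case: (ltngtP j.+1 n) => [lt|gt|last_j]; [by rewrite modn_small ?cycle_nth | lia |].
by rewrite last_j modnn -(cycle_nth n_pos) walk_n.
Qed.

Lemma cycle_shape : alt_even_cycle M1 M2 D comp.
Proof.
exists s, x0; cbv beta zeta; rewrite size_mkseq.
split; [|split; [|split; [|split; [|split]]]].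
- apply/(uniqP x0) => j k; rewrite !inE size_mkseq /= => jn kn e.
  have wj := cycle_nth jn; rewrite e in wj.
  by case: (ltngtP j k) => // jk; exfalso;
    [apply: (cycle_inj jk kn wj (cycle_nth kn)) | apply: (cycle_inj jk jn (cycle_nth kn) wj)].
- exact: cycle_length.
- by rewrite -Zodd_nat cycle_even.
- move=> y; split=> [/comp_walk [i wi]|/(nthP x0) [j jn <-]]; last first.
    by rewrite size_mkseq in jn; apply: walk_comp (cycle_nth jn).
  have [k kn [ek _]] := cycle_reduce i; apply/(nthP x0).
  by exists k; rewrite ?size_mkseq //; move: wi; rewrite ek cycle_nth // => -[].
- move=> a b Ca; have [i wi] := comp_walk Ca; rewrite (walk_edges b wi); split.
  + move=> [j Hj]; have [k kn [ek ek1]] := cycle_reduce j.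
    exists k => //; rewrite ek ek1 (cycle_nth kn) (cycle_next kn) in Hj.
    by case: Hj => -[[<-] [<-]]; [left|right].
  + move=> [k kn [[-> ->]|[-> ->]]]; exists (Z.of_nat k);
      [left|right]; by rewrite cycle_nth ?cycle_next.
- exists false => k kn.
  by apply: (window_edge_type (a := 0%Z) (cycle_nth kn) (cycle_next kn)).
Qed.
End Cycle.

Section NoReturn.
Hypothesis no_return : forall i, (0 < i)%Z -> walk i <> Some x0.

Lemma walk_inj i j c : walk i = Some c -> walk j = Some c -> i = j.
Proof.
wlog ij : i j / (i <= j)%Z.
  move=> H wi wj; case: (Z.leb_spec i j) => ij; first exact: H.
  by symmetry; apply: H => //; lia.
move=> wi wj; case: (Z.eq_dec i j) => // ne; exfalso.
have := walk_translate wi wj (walk_parity wi wj) (- i).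
rewrite Z.add_opp_diag_r walk0 Z.add_opp_r => ret.
by apply: (no_return (i := (j - i)%Z)); [lia|rewrite -ret].
Qed.

Lemma double_ray_shape : walk_domain None None -> alt_double_ray M1 M2 D comp.
Proof.
move=> dom; pose f i := odflt x0 (walk i).
have wf i : walk i = Some (f i).
  have /(dom i) : in_range None None i by split.
  by rewrite /f; case: (walk i).
exists f; split; [|split; [|split]].
- by move=> i j e; apply: (walk_inj (wf i)); rewrite e.
- move=> y; split=> [/comp_walk [i wi]|[i <-]]; last exact: walk_comp (wf i).
  by exists i; move: (wf i); rewrite wi => -[].
- move=> a b Ca; have [i wi] := comp_walk Ca; rewrite (walk_edges b wi).
  split=> -[j Hj]; exists j; move: Hj; rewrite -Z.add_1_r !wf.
  + by case=> -[[<-] [<-]]; [left|right].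
  + by case=> -[-> ->]; [left|right].
- by exists false => i; rewrite -Z.add_1_r; apply: walk_edge_type.
Qed.

Section Path.
Variables a b : Z.
Hypothesis dom : walk_domain (Some a) (Some b).

Let len := (Z.to_nat (b - a)).+1.
Let s := window a len.

Lemma path_le : (a <= b)%Z.
Proof. by have [a0 b0] := (dom 0%Z).1 walk0_defined; have := a0 a erefl; have := b0 b erefl; lia. Qed.

Lemma path_nth j : j < len -> walk (a + Z.of_nat j) = Some (nth x0 s j).
Proof. by apply: window_nth => k kl; apply/dom; split=> ? [<-]; have := path_le; lia. Qed.

Lemma path_nth_succ j : j.+1 < len -> walk (a + Z.of_nat j + 1) = Some (nth x0 s j.+1).
Proof. by move=> jl; rewrite -Z.add_assoc Z.add_1_r -Nat2Z.inj_succ path_nth. Qed.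

Lemma path_index i y : walk i = Some y -> exists2 j, j < len & i = (a + Z.of_nat j)%Z.
Proof.
move=> wi; have /dom [ai ib] : walk i <> None by rewrite wi.
have := ai a erefl; have := ib b erefl => ? ?.
by exists (Z.to_nat (i - a)); lia.
Qed.

Lemma path_edge j x y : walk j = Some x -> walk (j + 1) = Some y ->
  exists2 k, k.+1 < len & x = nth x0 s k /\ y = nth x0 s k.+1.
Proof.
move=> wx wy; have [k kl ek] := path_index wx; have [k' kl' ek'] := path_index wy.
have kk : k' = k.+1 by lia.
rewrite ek' kk in wy kl'; rewrite ek in wx; exists k => //.
by move: wx wy; rewrite !path_nth // => -[<-] [<-].
Qed.

Lemma even_path_shape u w : walk a = Some u -> walk b = Some w -> Z.odd a = Z.odd b ->
  (exists k, in_layer B k u /\ in_layer B k w) -> alt_even_path B M1 M2 D comp.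
Proof.
move=> wa wb ab [l [ul wl]].
exists s, x0; cbv beta zeta; rewrite size_mkseq.
split; [|split; [|split; [|split; [|split]]]].
- apply/(uniqP x0) => j k; rewrite !inE size_mkseq /= => jl kl e.
  have wj := path_nth jl; rewrite e in wj; have := walk_inj wj (path_nth kl); lia.
- rewrite /len /= -Zodd_nat Z2Nat.id ?Z.odd_sub ?ab; last by have := path_le; lia.
  by case: (Z.odd b).
- move=> y; split=> [/comp_walk [i wi]|/(nthP x0) [j jl <-]]; last first.
    by rewrite size_mkseq in jl; apply: walk_comp (path_nth jl).
  have [j jl ij] := path_index wi; apply/(nthP x0).
  by exists j; rewrite ?size_mkseq //; move: wi; rewrite ij path_nth // => -[].
- move=> a' b' Ca; have [i wi] := comp_walk Ca; rewrite (walk_edges b' wi); split.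
  + move=> [j [[w1 w2]|[w1 w2]]]; have [k kl [-> ->]] := path_edge w1 w2.
    * by exists k => //; left.
    * by exists k => //; right.
  + move=> [k kl [[-> ->]|[-> ->]]]; exists (a + Z.of_nat k)%Z;
      [left|right]; by rewrite path_nth ?path_nth_succ // ltnW.
- exists (Z.odd a) => j jl.
  exact: window_edge_type (path_nth (ltnW jl)) (path_nth_succ jl).
- have -> : nth x0 s 0 = u by apply: Some_inj; rewrite -path_nth //= Z.add_0_r.
  have -> : nth x0 s len.-1 = w.
    apply: Some_inj; rewrite -path_nth //= Z2Nat.id ?Zplus_minus //.
    by have := path_le; lia.
  by exists l.
Qed.
End Path.
End NoReturn.

Lemma component_shape :
  alt_even_cycle M1 M2 D comp \/ alt_double_ray M1 M2 D comp \/
  alt_even_path B M1 M2 D comp.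
Proof.
case: (classic (exists n, 0 < n /\ walk (Z.of_nat n) = Some x0)) => [ret|no_ret].
  have ret' : exists n, (0 < n) && decb (walk (Z.of_nat n) = Some x0).
    by case: ret => n [n0 wn]; exists n; rewrite n0; apply/decbE.
  case: (ex_minnP ret') => n /andP[n0 /decbE wn] n_min; left.
  by apply: (cycle_shape n0 wn) => p p0 wp; apply: n_min; rewrite p0; apply/decbE.
have no_return i : (0 < i)%Z -> walk i <> Some x0.
  by move=> i0 wi; apply: no_ret; exists (Z.to_nat i); rewrite Z2Nat.id; [split; [lia|]|lia].
have [lo [hi dom]] := walk_domain_exists.
case: lo dom => [a|] dom.
- have [u wa] := walk_first dom erefl; have [n un] := Hdag.2.1 u.
  have [b [w [hib wb ab _]]] := first_end dom erefl wa un.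
  rewrite hib in dom; right; right.
  exact: (even_path_shape no_return dom wa wb (esym ab) (path_layer dom wa wb)).
- case: hi dom => [b|] dom; last by right; left; apply: double_ray_shape.
  have [w wb] := walk_last dom erefl; have [n wn] := Hdag.2.1 w.
  by have [a [u []]] := last_end dom erefl wb wn.
Qed.
End Walk.

Theorem lemmaA2 (V : countType) (adj : V -> V -> Prop) (B : nat -> seq V)
    (M1 M2 : V -> V -> Prop) :
  simple_graph adj -> countably_infinite V -> connected_graph adj ->
  dagger adj B ->
  maximum_matching adj B M1 -> maximum_matching adj B M2 ->
  forall x0 : V, (exists y, symdiff M1 M2 x0 y) ->
  let C := fun y => clos_refl_trans V (symdiff M1 M2) x0 y in
  alt_even_cycle M1 M2 (symdiff M1 M2) C \/
  alt_double_ray M1 M2 (symdiff M1 M2) C \/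
  alt_even_path B M1 M2 (symdiff M1 M2) C.
Proof.
move=> Hsg _ _ Hdag HMM1 HMM2 x0 Hx0 C.
exact: (component_shape Hsg HMM1.1 HMM2.1 Hx0 Hdag HMM1 HMM2).
Qed.
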